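(* In the monkey model with $K\ge2$ letters, space probability $s\in(0,1)$, and equal letter probabilities $q_1=\cdots=q_K=(1-s)/K$, every rank $r\ge1$ satisfies $$\frac1K\,B_r^{\log_{q_1}K}<r<\frac{K}{K-1}\,B_r^{\log_{q_1}K},$$ so the power-law exponent is $-\beta=1/\log_{q_1}K=\frac{\log(1-s)}{\log K}-1$. In particular, for fixed $s$, $-\beta\to-1$ as $K\to\infty$.
   Context: Monkey model: a keyboard has $K$ letters $L_1,\dots,L_K$ struck independently with probabilities $q_1,\dots,q_K$ and a space character with probability $s$, where $\sum_i q_i+s=1$. A word is a finite (possibly empty) string $L_{i_1}\cdots L_{i_n}$ of letters followed by a space. Its base value is $B=q_{i_1}\cdots q_{i_n}$ (the empty word has base value $1$). The base values of all finitely long words, listed with multiplicity in non-increasing order with ties broken by alphabetical order, are denoted $B_1=1\ge B_2\ge\cdots$; $r$ is the rank of $B_r$. *)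

From Stdlib Require Import Reals Lra Lia List Arith.
Import ListNotations.
Open Scope R_scope.

(* Letters L_1..L_K are encoded as the naturals 0..K-1 (L_{i+1} <-> i),
   ordered alphabetically by the natural order.  A word is the finite string
   of letters preceding the space; we represent it by its list of letters. *)
Definition word := list nat.

Definition valid_word (K : nat) (w : word) : Prop :=
  Forall (fun i => (i < K)%nat) w.

Definition base_value (q : nat -> R) (w : word) : R :=
  fold_right (fun i acc => q i * acc) 1 w.

Fixpoint alpha_lt (u v : word) : Prop :=
  match u, v with
  | [], _ :: _ => True
  | a :: u', b :: v' => (a < b)%nat \/ (a = b /\ alpha_lt u' v')
  | _, _ => False
  end.

(* f r (for r >= 1) is the word of rank r: f is a bijection from the
   positive integers onto the valid words, listing the base values in
   non-increasing order with ties broken alphabetically.  Then B_r is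
   base_value q (f r). *)
Definition is_rank_enumeration (K : nat) (q : nat -> R) (f : nat -> word) : Prop :=
  (forall r, (1 <= r)%nat -> valid_word K (f r)) /\
  (forall r r', (1 <= r)%nat -> (1 <= r')%nat -> f r = f r' -> r = r') /\
  (forall w, valid_word K w -> exists r, (1 <= r)%nat /\ f r = w) /\
  (forall r r', (1 <= r)%nat -> (r < r')%nat ->
     base_value q (f r) > base_value q (f r') \/
     (base_value q (f r) = base_value q (f r') /\ alpha_lt (f r) (f r'))).

Definition logb (b x : R) : R := ln x / ln b.

(* With equal letter probabilities a word of length n has base value q1^n, so
   ranking by base value is ranking by length, and B_r^(log_{q1} K) = K^n when
   the word of rank r has length n.  The K^(n-1) words of length n - 1 all
   precede it, so r > K^(n-1); and it is preceded only by words of length at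
   most n, of which there are (K^(n+1) - 1)/(K - 1), so r < K^(n+1)/(K - 1).
   For the exponent, ln q1 = ln (1 - s) - ln K, so 1 / log_{q1} K tends to -1. *)
From Stdlib Require Import Reals List Lra Lia Sorted.
Import ListNotations.
Open Scope R_scope.

Section StronglySortedFacts.
Variables (A : Type) (R : A -> A -> Prop).

Lemma StronglySorted_app l1 l2 :
  StronglySorted R l1 -> StronglySorted R l2 ->
  (forall a b, In a l1 -> In b l2 -> R a b) -> StronglySorted R (l1 ++ l2).
Proof.
  induction l1 as [|a l1 IH]; simpl; auto.
  intros H1 H2 H12; inversion H1; subst; constructor.
  - apply IH; auto.
  - apply Forall_app; split; [assumption|].
    apply Forall_forall; auto.
Qed.

Lemma StronglySorted_map (g : A -> A) l :
  (forall a b, R a b -> R (g a) (g b)) ->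
  StronglySorted R l -> StronglySorted R (map g l).
Proof.
  intros Hg; induction l; simpl; intros H; inversion H; subst; constructor; auto.
  apply Forall_map; eapply Forall_impl; [|eassumption]; auto.
Qed.

Lemma StronglySorted_NoDup l :
  (forall a, ~ R a a) -> StronglySorted R l -> NoDup l.
Proof.
  intros Hirr; induction l; intros H; inversion H as [|? ? ? Hall]; subst; constructor; auto.
  intros Hin; rewrite Forall_forall in Hall; exact (Hirr a (Hall a Hin)).
Qed.

Lemma StronglySorted_nth d l :
  StronglySorted R l ->
  forall i j, (i < j < length l)%nat -> R (nth i l d) (nth j l d).
Proof.
  induction l; simpl; intros H i j Hij; [lia|].
  inversion H as [|? ? ? Hall]; subst.
  destruct i, j; try lia.
  - rewrite Forall_forall in Hall; apply Hall, nth_In; lia.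
  - apply IHl; auto; lia.
Qed.

End StronglySortedFacts.

Definition shortlex (u v : word) : Prop :=
  (length u < length v)%nat \/ (length u = length v /\ alpha_lt u v).

Lemma alpha_lt_irrefl u : ~ alpha_lt u u.
Proof. induction u; simpl; [tauto|]; intros [H|[_ H]]; [lia|tauto]. Qed.

Lemma shortlex_irrefl u : ~ shortlex u u.
Proof. intros [H|[_ H]]; [lia|exact (alpha_lt_irrefl u H)]. Qed.

Lemma cons_blocks_sorted (ws : list word) :
  StronglySorted shortlex ws ->
  (forall u v, In u ws -> In v ws -> length u = length v) ->
  forall k a, StronglySorted shortlex (flat_map (fun i => map (cons i) ws) (seq a k)).
Proof.
  intros Hws Hlen k; induction k as [|k IHk]; intros a; simpl; [constructor|].
  apply StronglySorted_app; auto.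
  - apply StronglySorted_map; auto.
    intros u v [H|[H1 H2]]; [left; simpl; lia|right; simpl; split; [lia|right; auto]].
  - intros x y (u & <- & Hu)%in_map_iff Hy.
    apply in_flat_map in Hy as (i & Hi%in_seq & (v & <- & Hv)%in_map_iff).
    right; simpl; split; [f_equal; auto|left; lia].
Qed.

Section Words.
Variable K : nat.

Fixpoint words_of_length (m : nat) : list word :=
  match m with
  | O => [[]]
  | S m => flat_map (fun i => map (cons i) (words_of_length m)) (seq 0 K)
  end.

Fixpoint words_shorter (N : nat) : list word :=
  match N with
  | O => []
  | S N => words_shorter N ++ words_of_length N
  end.

Lemma in_words_of_length m w :
  In w (words_of_length m) <-> valid_word K w /\ length w = m.
Proof.
  unfold valid_word; revert w; induction m as [|m IH]; intros w; simpl.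
  - split.
    + intros [<-|[]]; split; [constructor|reflexivity].
    + intros [_ H]; destruct w; [now left|discriminate].
  - rewrite in_flat_map; split.
    + intros (i & Hi%in_seq & (u & <- & Hu%IH)%in_map_iff).
      destruct Hu as [Hv Hlen]; split; [constructor; [lia|exact Hv]|simpl; lia].
    + intros [Hv Hlen]; destruct w as [|i u]; [discriminate|].
      inversion Hv; subst; simpl in Hlen.
      exists i; split; [apply in_seq; lia|].
      apply in_map, IH; split; [assumption|lia].
Qed.

Lemma length_words_of_length m : length (words_of_length m) = (K ^ m)%nat.
Proof.
  induction m as [|m IH]; simpl; [reflexivity|].
  rewrite (flat_map_constant_length (c := (K ^ m)%nat)), length_seq; [reflexivity|].
  intros i _; rewrite length_map; exact IH.
Qed.

Lemma in_words_shorter N w :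
  In w (words_shorter N) <-> valid_word K w /\ (length w < N)%nat.
Proof.
  induction N as [|N IH]; simpl; [split; [intros []|lia]|].
  rewrite in_app_iff, IH, in_words_of_length; split.
  - intros [[? ?]|[? ?]]; split; auto; lia.
  - intros [? ?]; destruct (Nat.eq_dec (length w) N); [right|left]; split; auto; lia.
Qed.

Lemma words_shorter_prefix N N' :
  (N <= N')%nat -> exists t, words_shorter N' = words_shorter N ++ t.
Proof.
  induction N' as [|N' IH]; intros HN.
  - replace N with 0%nat by lia; now exists [].
  - destruct (Nat.eq_dec N (S N')) as [->|HN'].
    + exists []; now rewrite app_nil_r.
    + destruct IH as [t Ht]; [lia|].
      exists (t ++ words_of_length N'); simpl; now rewrite Ht, app_assoc.
Qed.

(* The geometric sum 1 + K + ... + K^(N-1), kept free of division. *)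
Lemma length_words_shorter_geometric N :
  (1 <= K)%nat -> ((K - 1) * length (words_shorter N) + 1 = K ^ N)%nat.
Proof.
  intros HK; induction N as [|N IH]; simpl; [lia|].
  rewrite length_app, length_words_of_length; nia.
Qed.

Lemma le_length_words_shorter N : (1 <= K)%nat -> (N <= length (words_shorter N))%nat.
Proof.
  intros HK; induction N as [|N IH]; simpl; [lia|].
  rewrite length_app, length_words_of_length.
  assert (1 <= K ^ N)%nat by (apply Nat.neq_0_lt_0, Nat.pow_nonzero; lia); lia.
Qed.

Lemma words_of_length_sorted m : StronglySorted shortlex (words_of_length m).
Proof.
  induction m as [|m IH]; simpl; [repeat constructor|].
  apply cons_blocks_sorted; auto.
  intros u v [_ Hu]%in_words_of_length [_ Hv]%in_words_of_length; congruence.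
Qed.

Lemma words_shorter_sorted N : StronglySorted shortlex (words_shorter N).
Proof.
  induction N as [|N IH]; simpl; [constructor|].
  apply StronglySorted_app; auto using words_of_length_sorted.
  intros a b [_ Ha]%in_words_shorter [_ Hb]%in_words_of_length; left; lia.
Qed.

End Words.

Lemma base_value_const (q : R) (w : word) : base_value (fun _ => q) w = q ^ length w.
Proof. induction w as [|a w IH]; simpl; [reflexivity|]; rewrite IH; reflexivity. Qed.

Lemma pow_lt_contravar_lt1 (q : R) (a b : nat) : 0 < q < 1 -> (a < b)%nat -> q ^ b < q ^ a.
Proof.
  intros Hq Hab; replace b with (a + (b - a))%nat by lia; rewrite pow_add.
  pose proof (pow_lt_1_compat q (b - a) ltac:(lra) ltac:(lia)).
  pose proof (pow_lt q a ltac:(lra)); nra.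
Qed.

Section ShortlexRanking.
Variable K : nat.
Hypothesis HK : (1 <= K)%nat.

(* words_shorter K r has at least r entries, so the default [] is never hit. *)
Definition shortlex_rank_word (r : nat) : word := nth (r - 1) (words_shorter K r) [].

Lemma shortlex_rank_word_nth r N :
  (1 <= r)%nat -> (r - 1 < length (words_shorter K N))%nat ->
  shortlex_rank_word r = nth (r - 1) (words_shorter K N) [].
Proof.
  intros Hr HN; unfold shortlex_rank_word.
  pose proof (le_length_words_shorter K r HK).
  destruct (Nat.le_ge_cases r N) as [HrN|HNr].
  - destruct (words_shorter_prefix K r N HrN) as [t ->]; rewrite app_nth1; [reflexivity|lia].
  - destruct (words_shorter_prefix K N r HNr) as [t ->]; rewrite app_nth1; [reflexivity|lia].
Qed.

Lemma shortlex_rank_word_shortlex r r' :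
  (1 <= r)%nat -> (r < r')%nat -> shortlex (shortlex_rank_word r) (shortlex_rank_word r').
Proof.
  intros Hr Hrr'.
  pose proof (le_length_words_shorter K r' HK).
  rewrite (shortlex_rank_word_nth r r'), (shortlex_rank_word_nth r' r') by lia.
  apply StronglySorted_nth; [apply words_shorter_sorted|lia].
Qed.

Lemma shortlex_rank_word_valid r : (1 <= r)%nat -> valid_word K (shortlex_rank_word r).
Proof.
  intros Hr; unfold shortlex_rank_word.
  assert (Hin : In (nth (r - 1) (words_shorter K r) []) (words_shorter K r)).
  { apply nth_In; pose proof (le_length_words_shorter K r HK); lia. }
  apply in_words_shorter in Hin; tauto.
Qed.

Lemma shortlex_rank_word_surj w :
  valid_word K w -> exists r, (1 <= r)%nat /\ shortlex_rank_word r = w.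
Proof.
  intros Hw.
  assert (Hin : In w (words_shorter K (S (length w)))) by (apply in_words_shorter; auto).
  destruct (In_nth _ _ [] Hin) as [n [Hn Hnth]].
  exists (S n); split; [lia|].
  rewrite (shortlex_rank_word_nth (S n) (S (length w))); simpl; rewrite ?Nat.sub_0_r; auto; lia.
Qed.

Lemma shortlex_rank_enumeration (q : R) :
  0 < q < 1 -> is_rank_enumeration K (fun _ => q) shortlex_rank_word.
Proof.
  intros Hq; split; [|split; [|split]].
  - exact shortlex_rank_word_valid.
  - intros r r' Hr Hr' E.
    destruct (Nat.lt_total r r') as [Hlt|[Heq|Hlt]]; [|exact Heq|];
      [pose proof (shortlex_rank_word_shortlex r r' Hr Hlt) as H
      |pose proof (shortlex_rank_word_shortlex r' r Hr' Hlt) as H];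
      rewrite E in H; destruct (shortlex_irrefl _ H).
  - exact shortlex_rank_word_surj.
  - intros r r' Hr Hrr'; rewrite !base_value_const.
    destruct (shortlex_rank_word_shortlex r r' Hr Hrr') as [H|[-> H]].
    + left; apply pow_lt_contravar_lt1; auto.
    + now right.
Qed.

End ShortlexRanking.

Section RankBounds.
Variables (K : nat) (q : R) (f : nat -> word).
Hypothesis Hq : 0 < q < 1.
Hypothesis Hf : is_rank_enumeration K (fun _ => q) f.

Lemma rank_length_monotone r r' :
  (1 <= r)%nat -> (r < r')%nat -> (length (f r) <= length (f r'))%nat.
Proof.
  intros Hr Hrr'; destruct Hf as (_ & _ & _ & Hord).
  destruct (Nat.le_gt_cases (length (f r)) (length (f r'))) as [|Hc]; [assumption|].
  pose proof (pow_lt_contravar_lt1 q _ _ Hq Hc).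
  destruct (Hord r r' Hr Hrr') as [Hgt|[Heq _]]; rewrite !base_value_const in *; lra.
Qed.

Lemma rank_le_length_words_shorter r :
  (1 <= r)%nat -> (r <= length (words_shorter K (S (length (f r)))))%nat.
Proof.
  intros Hr; destruct Hf as (Hvalid & Hinj & _).
  replace r with (length (map f (seq 1 r))) at 1 by now rewrite length_map, length_seq.
  apply NoDup_incl_length.
  - apply NoDup_map_NoDup_ForallPairs; [|apply seq_NoDup].
    intros x y Hx%in_seq Hy%in_seq; apply Hinj; lia.
  - intros w (r' & <- & Hr'%in_seq)%in_map_iff.
    apply in_words_shorter; split; [apply Hvalid; lia|].
    destruct (Nat.eq_dec r' r) as [->|]; [lia|].
    pose proof (rank_length_monotone r' r ltac:(lia) ltac:(lia)); lia.
Qed.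

Lemma pow_le_rank_pred r :
  (1 <= r)%nat -> (1 <= length (f r))%nat -> (K ^ (length (f r) - 1) <= r - 1)%nat.
Proof.
  intros Hr Hn; destruct Hf as (_ & _ & Hsurj & _).
  rewrite <- length_words_of_length.
  replace (r - 1)%nat with (length (map f (seq 1 (r - 1)))) by now rewrite length_map, length_seq.
  apply NoDup_incl_length.
  - apply (StronglySorted_NoDup _ shortlex); [exact shortlex_irrefl|apply words_of_length_sorted].
  - intros w [Hw Hl]%in_words_of_length.
    destruct (Hsurj w Hw) as (r' & Hr' & <-).
    apply in_map; apply in_seq; split; [assumption|].
    destruct (Nat.lt_ge_cases r' r); [lia|].
    destruct (Nat.eq_dec r' r) as [->|]; [lia|].
    pose proof (rank_length_monotone r r' Hr ltac:(lia)); lia.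
Qed.

End RankBounds.

Lemma Rpower_pow_logb (q x : R) (n : nat) :
  0 < q -> q <> 1 -> 0 < x -> Rpower (q ^ n) (logb q x) = x ^ n.
Proof.
  intros Hq Hq1 Hx; unfold Rpower, logb.
  assert (Hlnq : ln q <> 0) by (intros E; apply Hq1, ln_inv; [lra|lra|now rewrite ln_1]).
  rewrite ln_pow by assumption.
  replace (ln x / ln q * (INR n * ln q)) with (INR n * ln x) by (field; exact Hlnq).
  exact (Rpower_pow n x Hx).
Qed.

Lemma INR_ge2 (K : nat) : (2 <= K)%nat -> 2 <= INR K.
Proof. intros HK; replace 2 with (INR 2) by (simpl; ring); now apply le_INR. Qed.

Section RealRankBounds.
Variables (K : nat) (q : R) (f : nat -> word).
Hypothesis HK : (2 <= K)%nat.
Hypothesis Hq : 0 < q < 1.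
Hypothesis Hf : is_rank_enumeration K (fun _ => q) f.

Lemma pow_div_lt_rank r : (1 <= r)%nat -> / INR K * INR K ^ length (f r) < INR r.
Proof.
  intros Hr; pose proof (INR_ge2 K HK).
  destruct (length (f r)) as [|m] eqn:Hlen.
  - assert (1 <= INR r) by (replace 1 with (INR 1) by reflexivity; now apply le_INR).
    assert (/ INR K < 1) by (rewrite <- Rinv_1; apply Rinv_lt_contravar; lra).
    simpl; lra.
  - pose proof (pow_le_rank_pred K q f Hq Hf r Hr ltac:(lia)) as Hle.
    rewrite Hlen, Nat.sub_succ, Nat.sub_0_r in Hle.
    apply le_INR in Hle; rewrite pow_INR, minus_INR in Hle by lia; simpl in Hle.
    replace (/ INR K * INR K ^ S m) with (INR K ^ m) by (simpl; field; lra); lra.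
Qed.

Lemma rank_lt_mul_pow r : (1 <= r)%nat -> INR r < INR K / (INR K - 1) * INR K ^ length (f r).
Proof.
  intros Hr; pose proof (INR_ge2 K HK).
  pose proof (rank_le_length_words_shorter K q f Hq Hf r Hr) as Hle.
  pose proof (length_words_shorter_geometric K (S (length (f r))) ltac:(lia)) as Hgeom.
  set (c := length (words_shorter K (S (length (f r))))) in *.
  apply le_INR in Hle; apply (f_equal INR) in Hgeom.
  rewrite plus_INR, mult_INR, pow_INR, minus_INR in Hgeom by lia; simpl in Hgeom.
  apply (Rmult_lt_reg_r (INR K - 1)); [lra|].
  replace (INR K / (INR K - 1) * INR K ^ length (f r) * (INR K - 1))
    with (INR K * INR K ^ length (f r)) by (field; lra).
  assert (INR r * (INR K - 1) <= INR c * (INR K - 1)) by (apply Rmult_le_compat_r; lra).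
  lra.
Qed.

End RealRankBounds.

Lemma inv_logb_div (p x : R) :
  0 < p < x -> 1 < x -> 1 / logb (p / x) x = ln p / ln x - 1.
Proof.
  intros Hp Hx; unfold logb.
  assert (Hlnx : 0 < ln x) by (rewrite <- ln_1; apply ln_increasing; lra).
  assert (E : ln (p / x) = ln p - ln x).
  { unfold Rdiv; rewrite ln_mult, ln_Rinv; try lra; apply Rinv_0_lt_compat; lra. }
  assert (ln p < ln x) by (apply ln_increasing; lra).
  rewrite E; field; lra.
Qed.

Lemma cv_infty_ln_INR : cv_infty (fun n => ln (INR n)).
Proof.
  intros M; destruct (INR_unbounded (exp M)) as [N HN]; exists N; intros n Hn.
  pose proof (exp_pos M); rewrite <- (ln_exp M).
  apply ln_increasing; [assumption|].
  pose proof (le_INR _ _ Hn); lra.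
Qed.

Lemma Un_cv_const (c : R) : Un_cv (fun _ => c) c.
Proof. intros eps Heps; exists 0%nat; intros; unfold Rdist; rewrite Rminus_diag, Rabs_R0; lra. Qed.

(* The identity of inv_logb_div only holds once INR K > p, hence the shift. *)
Lemma inv_logb_div_cv (p : R) :
  0 < p -> Un_cv (fun K : nat => 1 / logb (p / INR K) (INR K)) (-1).
Proof.
  intros Hp; destruct (INR_unbounded (Rmax p 1)) as [N HN].
  apply CV_shift with N.
  apply Un_cv_ext with (fun n => ln p * / ln (INR (n + N)) - 1).
  - intros n; rewrite inv_logb_div; [unfold Rdiv; ring| |];
      pose proof (le_INR _ _ (Nat.le_add_l N n)); pose proof (Rmax_l p 1);
      pose proof (Rmax_r p 1); lra.
  - replace (-1) with (ln p * 0 - 1) by ring.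
    apply CV_minus; [apply CV_mult|apply Un_cv_const].
    + apply Un_cv_const.
    + apply (CV_shift' (fun n => / ln (INR n))), cv_infty_cv_0, cv_infty_ln_INR.
Qed.

Theorem mainTheorem2 (s : R) (hs : 0 < s < 1) :
  (forall K : nat, (2 <= K)%nat ->
     let q1 := (1 - s) / INR K in
     (exists f, is_rank_enumeration K (fun _ => q1) f) /\
     (forall f, is_rank_enumeration K (fun _ => q1) f ->
        forall r : nat, (1 <= r)%nat ->
          / INR K * Rpower (base_value (fun _ => q1) (f r)) (logb q1 (INR K)) < INR r /\
          INR r < INR K / (INR K - 1) * Rpower (base_value (fun _ => q1) (f r)) (logb q1 (INR K))) /\
     1 / logb q1 (INR K) = ln (1 - s) / ln (INR K) - 1) /\
  Un_cv (fun K : nat => 1 / logb ((1 - s) / INR K) (INR K)) (-1).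
Proof.
  split; [|apply inv_logb_div_cv; lra].
  intros K HK q1; pose proof (INR_ge2 K HK).
  assert (Hq1 : 0 < q1 < 1).
  { unfold q1; split; [apply Rdiv_lt_0_compat; lra|].
    apply Rmult_lt_reg_r with (INR K); [lra|]; field_simplify; lra. }
  split; [|split].
  - exists (shortlex_rank_word K); apply shortlex_rank_enumeration; [lia|exact Hq1].
  - intros f Hf r Hr.
    rewrite base_value_const, Rpower_pow_logb by lra.
    split; [apply (pow_div_lt_rank K q1)|apply (rank_lt_mul_pow K q1)]; assumption.
  - apply inv_logb_div; lra.
Qed.
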